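(* Let $G$ be a graph, let $k\ge 1$ and $d\ge 0$ be integers, and let $\mathcal M$ be a family of non-trivial vertex-disjoint paths in $G$ which is a size-minimum $(d,k)$-extension of itself. Then: (1) no path in $\mathcal M$ has length less than $2k-1$; and (2) for every two distinct paths $P_1,P_2\in\mathcal M$, every vertex $x$ in the $k$-end of $P_1$, every vertex $y$ in the $k$-end of $P_2$, every $a\in N(x)\setminus V(\mathcal M)$ and every $b\in N(y)\setminus V(\mathcal M)$, there is no $ab$-path of length at most $d$ in $G-V(\mathcal M)$.
   Context: A path is non-trivial if its length (number of edges) is at least $1$. For a family $\mathcal M$ of vertex-disjoint paths, $|\mathcal M|$ is the number of paths, $V(\mathcal M)$ the union of their vertex sets and $E(\mathcal M)$ the union of their edge sets. The $k$-end of a path is the set of (at most $2k$) vertices of the path at distance at most $k-1$ along the path from one of its two endpoints (endpoints included). Given a family $\mathcal M$ of non-trivial vertex-disjoint paths, a family $\mathcal M'$ of non-trivial vertex-disjoint paths is a $(d,k)$-extension of $\mathcal M$ if $\mu:=|\mathcal M|-|\mathcal M'|\ge 0$, $|E(\mathcal M)\setminus E(\mathcal M')|\le 2(k-1)\mu$ and $|E(\mathcal M')\setminus E(\mathcal M)|\le (d+2)\mu$. $\mathcal M'$ is a size-minimum $(d,k)$-extension of $\mathcal M$ if it is a $(d,k)$-extension of $\mathcal M$ and every $(d,k)$-extension $\mathcal M''$ of $\mathcal M$ satisfies $|\mathcal M''|\ge|\mathcal M'|$. $N(x)$ denotes the set of neighbors of $x$. *)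

From mathcomp Require Import all_boot.
Set Implicit Arguments. Unset Strict Implicit. Unset Printing Implicit Defensive.

(* A (finite, simple) graph: vertex type T : finType, adjacency e : rel T,
   assumed symmetric and irreflexive in the theorem. *)

Section Defs.
Variables (T : finType) (e : rel T).

Definition gpath (p : seq T) : bool :=
  if p is x :: s then path e x s && uniq p else false.

Definition plen (p : seq T) : nat := (size p).-1.

Definition ntpath (p : seq T) : bool := gpath p && (1 <= plen p).

Definition pedges (p : seq T) : {set {set T}} :=
  [set [set xy.1; xy.2] | xy in zip p (behead p)].

Definition disjoint_pathfam (M : seq (seq T)) : bool :=
  all ntpath M && pairwise (fun p q => [disjoint p & q]) M.

Definition VM (M : seq (seq T)) : {set T} := [set x | has (fun p => x \in p) M].
Definition EM (M : seq (seq T)) : {set {set T}} := \bigcup_(p <- M) pedges p.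

Definition extension (d k : nat) (M M' : seq (seq T)) : bool :=
  let mu := size M - size M' in
  [&& disjoint_pathfam M', size M' <= size M,
      #|EM M :\: EM M'| <= 2 * (k - 1) * mu &
      #|EM M' :\: EM M| <= (d + 2) * mu].

Definition size_min_extension (d k : nat) (M M' : seq (seq T)) : Prop :=
  extension d k M M' /\ forall M'', extension d k M M'' -> size M' <= size M''.

(* k-end of a path p: vertices at distance <= k-1 along p from an endpoint *)
Definition kend (k : nat) (p : seq T) : {set T} :=
  [set x in p | (index x p < k) || (size p - index x p <= k)].

Definition short_path_avoiding (X : {set T}) (d : nat) (a b : T) : Prop :=
  exists q : seq T, [/\ gpath q, head a q = a, last a q = b, plen q <= d &
                        all (fun v => v \notin X) q].
End Defs.

(* A path of M with fewer than 2k - 1 edges could be deleted: this is a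
   (d,k)-extension of M with fewer paths.  If x, y lie in the k-ends of distinct
   paths P1, P2 and their outside neighbours a, b were joined by a path q of
   length at most d avoiding V(M), then the part of P1 ending at x, the edge xa,
   q, the edge by and the part of P2 starting at y would form one path J; trading
   P1, P2 for J loses at most 2(k - 1) edges and adds at most d + 2, again an
   extension with fewer paths.  Both contradict the size-minimality of M. *)

From mathcomp Require Import all_boot zify.
Set Implicit Arguments. Unset Strict Implicit. Unset Printing Implicit Defensive.

Lemma pairwise_sym_mem (X : eqType) (r : rel X) (s : seq X) u v :
  symmetric r -> pairwise r s -> u \in s -> v \in s -> u != v -> r u v.
Proof.
move=> r_sym; elim: s => [|w s IH] //= /andP[rw rs]; rewrite !inE.
have [-> _|uw /= us] := eqVneq u w.
  by have [//|vw /= vs _] := eqVneq v w; apply: (allP rw).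
have [-> _ _|vw /= vs] := eqVneq v w; first by rewrite r_sym; apply: (allP rw).
exact: IH.
Qed.

Lemma count_lt_size (X : eqType) (a : pred X) s u :
  u \in s -> ~~ a u -> count a s < size s.
Proof.
move=> us nau; rewrite -(count_predC a s) -addn1 leq_add2l -has_count.
by apply/hasP; exists u.
Qed.

Lemma count_add2_le_size (X : eqType) (a : pred X) s u v :
  u \in s -> v \in s -> u != v -> ~~ a u -> ~~ a v -> (count a s).+2 <= size s.
Proof.
move=> us vs uv nau nav; rewrite -(count_predC a s) -addn2 leq_add2l.
have no_common : count (predI (pred1 u) (pred1 v)) s = 0.
  rewrite (eq_count (a2 := pred0)) ?count_pred0 // => w /=.
  by case: eqP => [->|] //=; apply: negbTE.
have two : 2 <= count (predU (pred1 u) (pred1 v)) s.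
  have := count_predUI (pred1 u) (pred1 v) s; rewrite no_common addn0 => ->.
  by rewrite -addn1 leq_add // -has_count has_pred1.
by apply: leq_trans two (sub_count _ _) => w /orP[] /eqP ->.
Qed.

Section PathEdges.
Variable T : finType.
Implicit Types (x y : T) (s t p : seq T).

Lemma pedges1 x : pedges [:: x] = set0.
Proof. by apply/setP=> E; rewrite inE; apply/imsetP => -[]. Qed.

Lemma pedges_cons2 x y s : pedges [:: x, y & s] = [set x; y] |: pedges (y :: s).
Proof.
apply/setP=> E; rewrite !inE; apply/imsetP/orP => [[xy] | [/eqP -> | /imsetP[xy]]].
- by rewrite inE => /orP[/eqP -> -> | xys ->]; [left | right; apply/imsetP; exists xy].
- by exists (x, y); rewrite ?inE ?eqxx.
- by exists xy; rewrite // inE; apply/orP; right.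
Qed.

Lemma pedges_split s x t :
  pedges (s ++ x :: t) = pedges (rcons s x) :|: pedges (x :: t).
Proof.
elim: s => [|z [|w s] IH] /=; first by rewrite pedges1 set0U.
  by rewrite !pedges_cons2 pedges1 setU0.
by rewrite !pedges_cons2 IH setUA.
Qed.

Lemma pedges_cat s x y t :
  pedges (rcons s x ++ y :: t) = pedges (rcons s x) :|: ([set x; y] |: pedges (y :: t)).
Proof. by rewrite cat_rcons pedges_split pedges_cons2. Qed.

Lemma pedges_rev p : pedges (rev p) = pedges p.
Proof.
elim: p => [|x [|y s] IH] //.
rewrite rev_cons [rev _]rev_cons -cats1 pedges_cat -rev_cons IH pedges1 setU0.
by rewrite pedges_cons2 setUC [[set y; x]]setUC.
Qed.

Lemma card_pedges p : #|pedges p| <= plen p.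
Proof.
apply: leq_trans (leq_imset_card _ _) _; apply: leq_trans (card_size _) _.
by rewrite size_zip size_behead geq_minr.
Qed.

Lemma card_pedges_suffixD s x t :
  #|pedges (s ++ x :: t) :\: pedges (x :: t)| <= size s.
Proof.
have := card_pedges (rcons s x); rewrite /plen size_rcons; apply: leq_trans.
rewrite pedges_split; apply/subset_leq_card/subsetP => E.
by rewrite !inE => /andP[/negbTE -> /orP[]].
Qed.
End PathEdges.

Section GraphPaths.
Variables (T : finType) (e : rel T).
Implicit Types (x y z : T) (s t p q : seq T).

Lemma gpath_uniq p : gpath e p -> uniq p.
Proof. by case: p => // x s /andP[]. Qed.

Lemma gpath_suffix s y t : gpath e (s ++ y :: t) -> gpath e (y :: t).
Proof.
case: s => [|x s] // /andP[pst ust].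
move: pst; rewrite /= cat_path /= => /and3P[_ _ ->].
by move: ust; rewrite (cat_uniq (x :: s)) => /and3P[_ _].
Qed.

Lemma gpath_cat z p q :
  gpath e p -> gpath e q -> e (last z p) (head z q) -> [disjoint p & q] ->
  gpath e (p ++ q).
Proof.
case: p => [|x s] // /andP[ps us]; case: q => [|y t]; first by rewrite cats0.
move=> /andP[pt ut] exy dst; apply/andP; split; first by rewrite cat_path ps /= exy.
by rewrite (cat_uniq (x :: s) (y :: t)) us ut andbT -disjoint_has disjoint_sym.
Qed.

Hypothesis e_sym : symmetric e.

Lemma gpath_rev p : gpath e p -> gpath e (rev p).
Proof.
case: p => [|x s] // /andP[ps us].
have revE : rev (x :: s) = last x s :: rev (belast x s) by rewrite lastI rev_rcons.
rewrite revE; apply/andP; split; last by rewrite -revE rev_uniq.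
by rewrite rev_path (@eq_path _ _ e) // => u v; rewrite /= e_sym.
Qed.

Lemma kend_subpath k P x : gpath e P -> x \in kend k P ->
  exists t, [/\ gpath e (x :: t), {subset x :: t <= P},
                pedges (x :: t) \subset pedges P &
                #|pedges P :\: pedges (x :: t)| <= k - 1].
Proof.
move=> gP; rewrite inE => /andP[xP near_end].
have suffix_subpath s t : gpath e (s ++ x :: t) -> size s <= k - 1 ->
    {subset s ++ x :: t <= P} -> pedges (s ++ x :: t) = pedges P ->
  exists t', [/\ gpath e (x :: t'), {subset x :: t' <= P},
                 pedges (x :: t') \subset pedges P &
                 #|pedges P :\: pedges (x :: t')| <= k - 1].
  move=> gst small sub edgesE; exists t; split.
  - exact: gpath_suffix gst.
  - by move=> u ut; apply: sub; rewrite mem_cat ut orbT.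
  - by rewrite -edgesE pedges_split subsetUr.
  - by rewrite -edgesE; apply: leq_trans (card_pedges_suffixD _ _ _) small.
have [p1 [p2 P_eq]] : exists p1 p2, P = p1 ++ x :: p2.
  by case/splitPr: xP => p1 p2; exists p1, p2.
have x_notin_p1 : x \notin p1.
  by move: (gpath_uniq gP); rewrite P_eq cat_uniq /= => /and3P[_ /norP[]].
rewrite P_eq index_cat (negbTE x_notin_p1) /= eqxx addn0 size_cat /= in near_end.
case/orP: near_end => [near_head | near_tail].
  by apply: (suffix_subpath p1 p2); rewrite -?P_eq //; lia.
have revE : rev P = rev p2 ++ x :: rev p1 by rewrite P_eq rev_cat rev_cons cat_rcons.
apply: (suffix_subpath (rev p2) (rev p1)); rewrite -?revE.
- exact: gpath_rev.
- by rewrite size_rev; lia.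
- by move=> u; rewrite mem_rev.
- exact: pedges_rev.
Qed.

(* J runs along P1 to x, takes the edge xa, follows q from a to b, takes the
   edge by and runs along P2 from y. *)
Lemma kend_join k P1 P2 x y a b q :
  gpath e P1 -> gpath e P2 -> [disjoint P1 & P2] ->
  x \in kend k P1 -> y \in kend k P2 -> e x a -> e y b ->
  gpath e q -> head a q = a -> last a q = b ->
  [disjoint q & P1] -> [disjoint q & P2] ->
  exists J, [/\ ntpath e J, {subset J <= P1 ++ q ++ P2},
                #|pedges P1 :\: pedges J| <= k - 1,
                #|pedges P2 :\: pedges J| <= k - 1 &
                #|pedges J :\: (pedges P1 :|: pedges P2)| <= (plen q).+2].
Proof.
move=> gP1 gP2 dj12 xk yk exa eyb gq qa qb djq1 djq2.
have [t1 [g1 sub1 E1 lost1]] := kend_subpath gP1 xk.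
have [t2 [g2 sub2 E2 lost2]] := kend_subpath gP2 yk.
case: q gq qa qb djq1 djq2 => // a0 q gq /= a0a qb djq1 djq2; subst a0.
have toP1 : rcons (rev t1) x \subset P1.
  by apply/subsetP => z; rewrite -rev_cons mem_rev; apply: sub1.
have toP2 : (y :: t2) \subset P2 by apply/subsetP.
set Q := (a :: q) ++ y :: t2.
set J := rcons (rev t1) x ++ Q.
have gQ : gpath e Q.
  apply: (@gpath_cat a) => //=; first by rewrite qb e_sym.
  exact: disjointWr toP2 djq2.
have gJ : gpath e J.
  apply: (@gpath_cat x); rewrite ?last_rcons //.
  - by rewrite -rev_cons gpath_rev.
  rewrite disjoint_sym disjoint_cat (disjointWr toP1 djq1).
  by rewrite (disjointW toP2 toP1) // disjoint_sym.
have aq_rcons : a :: q = rcons (belast a q) b by rewrite -qb -lastI.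
have EQ : pedges Q = pedges (a :: q) :|: ([set b; y] |: pedges (y :: t2)).
  by rewrite /Q {1}aq_rcons pedges_cat -aq_rcons.
have EJ : pedges J = pedges (x :: t1) :|: ([set x; a] |: pedges Q).
  by rewrite /J pedges_cat -rev_cons pedges_rev.
exists J; split.
- by rewrite /ntpath gJ /plen /J size_cat size_rcons addSn /Q /= addnS.
- move=> z; rewrite /J /Q !mem_cat.
  case/or3P => [/(subsetP toP1) -> // | zq | /(subsetP toP2) zP2].
  + by rewrite -cat_cons mem_cat zq orbT.
  + by rewrite -cat_cons !mem_cat zP2 !orbT.
- apply: leq_trans lost1; apply/subset_leq_card/setDS.
  by rewrite EJ subsetUl.
- apply: leq_trans lost2; apply/subset_leq_card/setDS.
  by rewrite EJ EQ !setUA subsetUr.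
have gained : pedges J :\: (pedges P1 :|: pedges P2) \subset
    [set x; a] |: ([set b; y] |: pedges (a :: q)).
  apply/subsetP => E; rewrite EJ EQ !inE negb_or.
  case/andP => /andP[nP1 nP2] /or4P[EP | -> | -> | /orP[-> | EP]]; rewrite ?orbT //.
  - by rewrite (subsetP E1 _ EP) in nP1.
  - by rewrite (subsetP E2 _ EP) in nP2.
apply: leq_trans (subset_leq_card gained) _; rewrite !cardsU1.
exact: leq_add (leq_b1 _) (leq_add (leq_b1 _) (card_pedges _)).
Qed.
End GraphPaths.

Section PathFamilies.
Variables (T : finType) (e : rel T).
Implicit Types (M : seq (seq T)) (p q J : seq T).

Lemma EM_cons p M : EM (p :: M) = pedges p :|: EM M.
Proof. by rewrite /EM big_cons. Qed.

Lemma EMP E M : reflect (exists2 p, p \in M & E \in pedges p) (E \in EM M).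
Proof.
elim: M => [|p M IH]; first by rewrite /EM big_nil inE; constructor; case.
rewrite EM_cons inE; apply: (iffP orP) => [[Ep | /IH[q qM Eq]] | [q]].
- by exists p; rewrite ?inE ?eqxx.
- by exists q; rewrite // inE qM orbT.
by rewrite inE => /orP[/eqP -> | qM] Eq; [left | right; apply/IH; exists q].
Qed.

Lemma pedges_sub_EM p M : p \in M -> pedges p \subset EM M.
Proof. by move=> pM; apply/subsetP => E Ep; apply/EMP; exists p. Qed.

Lemma EM_filter_sub a M : EM (filter a M) \subset EM M.
Proof.
apply/subsetP => E /EMP[p]; rewrite mem_filter => /andP[_ pM] Ep.
by apply/EMP; exists p.
Qed.

Lemma EM_filterDP a M E :
  E \in EM M :\: EM (filter a M) -> exists2 p, (p \in M) && ~~ a p & E \in pedges p.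
Proof.
rewrite inE => /andP[EnF /EMP[p pM Ep]]; exists p => //; rewrite pM /=.
by apply: contra EnF => ap; apply/EMP; exists p; rewrite // mem_filter ap.
Qed.

Lemma mem_VM z p M : p \in M -> z \in p -> z \in VM M.
Proof. by move=> pM zp; rewrite inE; apply/hasP; exists p. Qed.

Lemma avoid_VM_disjoint q p M :
  all (fun v => v \notin VM M) q -> p \in M -> [disjoint q & p].
Proof.
move=> /allP qV pM; rewrite disjoint_has; apply/hasPn => z /qV.
by apply: contra; apply: mem_VM.
Qed.

Lemma disjoint_pathfam_gpath M p : disjoint_pathfam e M -> p \in M -> gpath e p.
Proof. by case/andP => /allP ntM _ /ntM /andP[]. Qed.

Lemma disjoint_pathfam_mem M p q :
  disjoint_pathfam e M -> p \in M -> q \in M -> p != q -> [disjoint p & q].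
Proof.
by case/andP => _; apply: pairwise_sym_mem => u v; rewrite disjoint_sym.
Qed.

Lemma disjoint_pathfam_filter a M :
  disjoint_pathfam e M -> disjoint_pathfam e (filter a M).
Proof.
case/andP => ntM djM; rewrite /disjoint_pathfam pairwise_filter // andbT.
by rewrite all_filter; apply: sub_all ntM => p /= ->; rewrite implybT.
Qed.

Lemma extension_fewer d k M M' : disjoint_pathfam e M' -> size M' < size M ->
  #|EM M :\: EM M'| <= 2 * (k - 1) -> #|EM M' :\: EM M| <= d + 2 ->
  extension e d k M M'.
Proof.
move=> djM' fewer lost gained; have mu_gt0 : 0 < size M - size M' by rewrite subn_gt0.
rewrite /extension djM' ltnW //=.
by rewrite (leq_trans lost) ?(leq_trans gained) // leq_pmulr.
Qed.

Lemma remove_path_extension d k M P : disjoint_pathfam e M -> P \in M ->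
  plen P <= 2 * (k - 1) -> extension e d k M [seq p <- M | p != P].
Proof.
move=> djM PM short; apply: extension_fewer.
- exact: disjoint_pathfam_filter.
- by rewrite size_filter (count_lt_size PM) ?eqxx.
- apply: leq_trans short; apply: leq_trans (card_pedges P).
  apply/subset_leq_card/subsetP => E /EM_filterDP[p /andP[_]].
  by rewrite negbK => /eqP ->.
- move: (EM_filter_sub (fun p => p != P) M).
  by rewrite -setD_eq0 => /eqP ->; rewrite cards0.
Qed.

Lemma replace_two_paths_extension d k M P1 P2 J :
  disjoint_pathfam e M -> P1 \in M -> P2 \in M -> P1 != P2 -> ntpath e J ->
  (forall p, p \in M -> p != P1 -> p != P2 -> [disjoint J & p]) ->
  #|pedges P1 :\: pedges J| <= k - 1 -> #|pedges P2 :\: pedges J| <= k - 1 ->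
  #|pedges J :\: EM M| <= d + 2 ->
  extension e d k M (J :: [seq p <- M | (p != P1) && (p != P2)]).
Proof.
move=> djM P1M P2M P12 ntJ djJ lost1 lost2 gained.
set others := fun p => (p != P1) && (p != P2).
apply: extension_fewer.
- have /andP[ntF djF] := disjoint_pathfam_filter others djM.
  rewrite /disjoint_pathfam /= ntJ ntF djF /= andbT.
  by apply/allP => p; rewrite mem_filter => /andP[/andP[pP1 pP2] pM]; apply: djJ.
- by rewrite /= size_filter (count_add2_le_size P1M P2M P12) // negb_and negbK eqxx ?orbT.
- have lost_sub : EM M :\: EM (J :: filter others M) \subset
      (pedges P1 :\: pedges J) :|: (pedges P2 :\: pedges J).
    apply/subsetP => E; rewrite EM_cons !inE negb_or => /andP[/andP[EnJ EnF] EM_E].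
    have /EM_filterDP[p /andP[_]] : E \in EM M :\: EM (filter others M).
      by rewrite inE EnF.
    by rewrite negb_and !negbK EnJ /= => /orP[] /eqP <- ->; rewrite ?orbT.
  apply: leq_trans (subset_leq_card lost_sub) _.
  apply: leq_trans (leq_card_setU _ _) _.
  by rewrite mul2n -addnn leq_add.
- apply: leq_trans gained; apply/subset_leq_card/subsetP => E.
  rewrite EM_cons !inE => /andP[EnM /orP[EJ | EF]]; first by rewrite EnM EJ.
  by rewrite (subsetP (EM_filter_sub _ _) _ EF) in EnM.
Qed.
End PathFamilies.

Theorem lemma2p3 (T : finType) (e : rel T) (k d : nat) (M : seq (seq T)) :
  symmetric e -> irreflexive e -> 1 <= k ->
  disjoint_pathfam e M ->
  size_min_extension e d k M M ->
  (forall P, P \in M -> 2 * k - 1 <= plen P) /\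
  (forall P1 P2 x y a b, P1 \in M -> P2 \in M -> P1 != P2 ->
     x \in kend k P1 -> y \in kend k P2 ->
     e x a -> a \notin VM M -> e y b -> b \notin VM M ->
     ~ short_path_avoiding e (VM M) d a b).
Proof.
move=> e_sym _ _ djM [_ minM]; split.
  move=> P PM; rewrite leqNgt; apply/negP => short.
  have /minM : extension e d k M [seq p <- M | p != P].
    by apply: remove_path_extension => //; lia.
  by rewrite size_filter leqNgt (count_lt_size PM) ?eqxx.
move=> P1 P2 x y a b P1M P2M P12 xk yk exa aV eyb bV [q [gq qa qb short qV]].
have gM := disjoint_pathfam_gpath djM.
have djM_mem := disjoint_pathfam_mem djM.
have [J [ntJ JV lost1 lost2 gained]] :=
  kend_join e_sym (gM _ P1M) (gM _ P2M) (djM_mem _ _ P1M P2M P12) xk yk exa eyb gq qa qb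
    (avoid_VM_disjoint qV P1M) (avoid_VM_disjoint qV P2M).
have /minM : extension e d k M (J :: [seq p <- M | (p != P1) && (p != P2)]).
  apply: replace_two_paths_extension => // [p pM pP1 pP2 |].
    apply: disjointWl (introT subsetP JV) _.
    rewrite !disjoint_cat (avoid_VM_disjoint qV pM).
    by rewrite !djM_mem // eq_sym.
  apply: leq_trans (_ : _ <= (plen q).+2) _; last by rewrite -addn2 leq_add2r.
  apply: leq_trans gained; apply/subset_leq_card/setDS.
  by rewrite subUset !pedges_sub_EM.
by rewrite /= size_filter leqNgt (count_add2_le_size P1M P2M P12) //
  !negb_and !negbK eqxx ?orbT.
Qed.
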